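(* Let $\mathcal{C}$ be a category, $J$ a directed partially ordered set, and let $\boldsymbol{X}=(X_\lambda,p_{\lambda\lambda'},\Lambda)$ and $\boldsymbol{Y}=(Y_\mu,q_{\mu\mu'},M)$ be inverse systems in $\mathcal{C}$ with $M$ cofinite. Then every morphism $\boldsymbol{f}=[(f,f^j_\mu)]:\boldsymbol{X}\to\boldsymbol{Y}$ of $pro^J$-$\mathcal{C}$ admits a simple representative $(f',f'^j_\mu):\boldsymbol{X}\to\boldsymbol{Y}$.
   Context: An inverse system $\boldsymbol{X}=(X_\lambda,p_{\lambda\lambda'},\Lambda)$ in $\mathcal{C}$: $\Lambda$ directed preordered, morphisms $p_{\lambda\lambda'}:X_{\lambda'}\to X_\lambda$ for $\lambda\le\lambda'$, $p_{\lambda\lambda}=1$, $p_{\lambda\lambda'}p_{\lambda'\lambda''}=p_{\lambda\lambda''}$. A directed set is cofinite if each element has finitely many predecessors. A $J$-morphism $(f,f^j_\mu):\boldsymbol{X}\to\boldsymbol{Y}$: $f:M\to\Lambda$ and $\mathcal{C}$-morphisms $f^j_\mu:X_{f(\mu)}\to Y_\mu$ ($\mu\in M$, $j\in J$) such that for all $\mu\le\mu'$ there exist $\lambda\ge f(\mu),f(\mu')$ and $j_0$ with $f^{j'}_\mu p_{f(\mu)\lambda}=q_{\mu\mu'}f^{j'}_{\mu'}p_{f(\mu')\lambda}$ for all $j'\ge j_0$. It is simple if $f$ is increasing and for every $\mu\le\mu'$ one may take $\lambda=f(\mu')$. $(f,f^j_\mu)\sim(f',f'^j_\mu)$ iff for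 every $\mu$ there exist $\lambda\ge f(\mu),f'(\mu)$ and $j_0$ with $f^{j'}_\mu p_{f(\mu)\lambda}=f'^{j'}_\mu p_{f'(\mu)\lambda}$ for all $j'\ge j_0$. $pro^J$-$\mathcal{C}$ is the category of inverse systems and $\sim$-classes of $J$-morphisms, composition $(g,g^j_\nu)(f,f^j_\mu)=(fg,g^j_\nu f^j_{g(\nu)})$. *)

From Stdlib Require Import List.
Set Implicit Arguments.
Unset Strict Implicit.

Record Category := {
  Ob :> Type;
  Hom : Ob -> Ob -> Type;
  comp : forall {x y z : Ob}, Hom y z -> Hom x y -> Hom x z;
  idm : forall a : Ob, Hom a a;
  comp_assoc : forall a b c d (h : Hom c d) (g : Hom b c) (f : Hom a b),
      comp h (comp g f) = comp (comp h g) f;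
  comp_id_l : forall a b (f : Hom a b), comp (idm b) f = f;
  comp_id_r : forall a b (f : Hom a b), comp f (idm a) = f
}.
Arguments Hom {c} _ _ : rename.
Arguments comp {c x y z} _ _ : rename.
Arguments idm {c} _ : rename.

Record DirPreorder := {
  Idx :> Type;
  dle : Idx -> Idx -> Prop;
  dle_refl : forall x, dle x x;
  dle_trans : forall x y z, dle x y -> dle y z -> dle x z;
  dle_directed : forall x y, exists z, dle x z /\ dle y z
}.
Arguments dle {d} _ _ : rename.

Record DirPoset := {
  dp :> DirPreorder;
  dle_antisym : forall x y : dp, dle x y -> dle y x -> x = y
}.

Definition cofinite (M : DirPreorder) : Prop :=
  forall m : M, exists l : list M, forall m' : M, dle m' m -> In m' l.

Record InvSys (C : Category) := {
  ind : DirPreorder;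
  obj : ind -> Ob C;
  bond : forall l l' : ind, dle l l' -> Hom (obj l') (obj l);
  bond_id : forall (l : ind) (h : dle l l), bond h = idm (obj l);
  bond_comp : forall (l l' l'' : ind) (h1 : dle l l') (h2 : dle l' l'')
      (h3 : dle l l''), comp (bond h1) (bond h2) = bond h3
}.
Arguments ind {C} _.
Arguments obj {C} _ _.
Arguments bond {C} _ {l l'} _.

Record JData (C : Category) (J : DirPoset) (X Y : InvSys C) := {
  jmap : ind Y -> ind X;
  jcomp : forall (j : J) (mu : ind Y), Hom (obj X (jmap mu)) (obj Y mu)
}.
Arguments jmap {C J X Y} _ _.
Arguments jcomp {C J X Y} _ _ _.

Definition is_Jmorphism {C : Category} {J : DirPoset} {X Y : InvSys C}
    (F : JData J X Y) : Prop :=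
  forall (mu mu' : ind Y) (h : dle mu mu'),
    exists (lam : ind X) (h1 : dle (jmap F mu) lam) (h2 : dle (jmap F mu') lam)
           (j0 : J),
      forall j' : J, dle j0 j' ->
        comp (jcomp F j' mu) (bond X h1)
        = comp (bond Y h) (comp (jcomp F j' mu') (bond X h2)).

Definition is_simple {C : Category} {J : DirPoset} {X Y : InvSys C}
    (F : JData J X Y) : Prop :=
  is_Jmorphism F /\
  (forall mu mu' : ind Y, dle mu mu' -> dle (jmap F mu) (jmap F mu')) /\
  (forall (mu mu' : ind Y) (h : dle mu mu') (h1 : dle (jmap F mu) (jmap F mu')),
     exists j0 : J, forall j' : J, dle j0 j' ->
       comp (jcomp F j' mu) (bond X h1)
       = comp (bond Y h) (jcomp F j' mu')).

Definition Jsim {C : Category} {J : DirPoset} {X Y : InvSys C}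
    (F G : JData J X Y) : Prop :=
  forall mu : ind Y,
    exists (lam : ind X) (h1 : dle (jmap F mu) lam) (h2 : dle (jmap G mu) lam)
           (j0 : J),
      forall j' : J, dle j0 j' ->
        comp (jcomp F j' mu) (bond X h1) = comp (jcomp G j' mu) (bond X h2).

(* Cofiniteness of M does two things.  Each μ has finitely many predecessors,
   so some index b(μ) of X lies above a level at which every J-morphism square
   ending at μ commutes; and the strict order of M is well founded, so a
   recursion along it yields an increasing f' with b ≤ f'.  A square that
   commutes at some level commutes at every higher one, hence composing f^j_μ
   with the bonding morphism X_{f'(μ)} → X_{f(μ)} gives a simple J-morphism,
   which is equivalent to f by construction. *)
From Stdlib Require Import List Lia Wf_nat Classical ClassicalEpsilon
  FunctionalExtensionality PropExtensionality.

Lemma bond_irrelevant {C : Category} {X : InvSys C} {l l' : ind X}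
    (h h' : dle l l') :
  bond X h = bond X h'.
Proof.
  rewrite <- (bond_comp h (dle_refl l') h'), bond_id, comp_id_r.
  reflexivity.
Qed.

Lemma upper_bound_list {D : DirPreorder} {A : Type} (phi : A -> D)
    (l : list A) (d : D) :
  exists u, dle d u /\ forall x, In x l -> dle (phi x) u.
Proof.
  induction l as [|a l [u [Hdu Hlu]]].
  - exists d; split; [apply dle_refl | intros x []].
  - destruct (dle_directed u (phi a)) as [z [Huz Haz]].
    exists z; split; [eapply dle_trans; eauto |].
    intros x [<- | Hx]; [exact Haz | eapply dle_trans; eauto].
Qed.

Fixpoint count_sat {A : Type} (P : A -> Prop) (l : list A) : nat :=
  match l with
  | nil => 0
  | a :: l =>
      (if excluded_middle_informative (P a) then 1 else 0) + count_sat P l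
  end.

Lemma count_sat_le {A : Type} (P Q : A -> Prop) (l : list A) :
  (forall x, P x -> Q x) -> count_sat P l <= count_sat Q l.
Proof.
  intros HPQ; induction l as [|a l IH]; simpl; [lia |].
  destruct (excluded_middle_informative (P a)),
    (excluded_middle_informative (Q a)); try lia.
  exfalso; auto.
Qed.

Lemma count_sat_lt {A : Type} (P Q : A -> Prop) (l : list A) (a : A) :
  (forall x, P x -> Q x) -> In a l -> Q a -> ~ P a ->
  count_sat P l < count_sat Q l.
Proof.
  intros HPQ Hin HQa HPa; induction l as [|b l IH]; simpl in *; [contradiction |].
  pose proof (count_sat_le P Q l HPQ).
  destruct Hin as [-> | Hin].
  - destruct (excluded_middle_informative (P a)),
      (excluded_middle_informative (Q a)); try lia; contradiction.
  - specialize (IH Hin).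
    destruct (excluded_middle_informative (P b)),
      (excluded_middle_informative (Q b)); try lia.
    exfalso; auto.
Qed.

Section MonotoneDomination.

Context {M Lam : DirPreorder}.
Hypothesis hM : cofinite M.
Variable b : M -> Lam.

Definition strictly_below (nu mu : M) : Prop := dle nu mu /\ ~ dle mu nu.

(* Strictly descending from [nu] decreases the number of predecessors of [nu]
   found in [l]. *)
Lemma strictly_below_Acc (l : list M) (nu : M) :
  (forall x, dle x nu -> In x l) -> Acc strictly_below nu.
Proof.
  induction nu as [nu IH] using (well_founded_induction
    (well_founded_ltof _ (fun nu => count_sat (fun x => dle x nu) l))).
  intros Hl; constructor; intros nu' [Hle Hnge].
  apply IH.
  - apply count_sat_lt with (a := nu); [intros x Hx; eapply dle_trans; eauto |
      apply Hl, dle_refl | apply dle_refl | exact Hnge].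
  - intros x Hx; apply Hl; eapply dle_trans; eauto.
Qed.

Lemma strictly_below_wf : well_founded strictly_below.
Proof.
  intros mu; destruct (hM mu) as [l Hl].
  exact (strictly_below_Acc l mu Hl).
Qed.

(* The bound is required over the whole down-set of [mu], not just at [mu],
   so that it depends on [mu] only up to equivalence ([admissible_equiv]). *)
Definition admissible (mu : M) (g : forall nu, strictly_below nu mu -> Lam)
    (l : Lam) : Prop :=
  (forall nu, dle nu mu -> dle (b nu) l) /\
  (forall nu (h : strictly_below nu mu), dle (g nu h) l).

Lemma admissible_exists (g : M -> Lam) (mu : M) :
  exists l, admissible mu (fun nu _ => g nu) l.
Proof.
  destruct (hM mu) as [pre Hpre].
  destruct (upper_bound_list b pre (b mu)) as [u1 [_ Hu1]].
  destruct (upper_bound_list g pre (b mu)) as [u2 [_ Hu2]].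
  destruct (dle_directed u1 u2) as [z [Hz1 Hz2]].
  exists z; split.
  - intros nu Hnu; eapply dle_trans; [apply Hu1, Hpre, Hnu | exact Hz1].
  - intros nu [Hnu _]; eapply dle_trans; [apply Hu2, Hpre, Hnu | exact Hz2].
Qed.

Lemma admissible_equiv (g : M -> Lam) (mu mu' : M) (l : Lam) :
  dle mu mu' -> dle mu' mu ->
  admissible mu (fun nu _ => g nu) l -> admissible mu' (fun nu _ => g nu) l.
Proof.
  intros H1 H2 [Hb Hg]; split.
  - intros nu Hnu; apply Hb; eapply dle_trans; eauto.
  - intros nu [Hle Hnge]; apply (Hg nu); split.
    + eapply dle_trans; eauto.
    + intros Hge; apply Hnge; eapply dle_trans; eauto.
Qed.

Definition dominating_step (mu : M)
    (g : forall nu, strictly_below nu mu -> Lam) : Lam :=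
  epsilon (inhabits (b mu)) (admissible mu g).

Definition dominating : M -> Lam :=
  Fix strictly_below_wf (fun _ => Lam) dominating_step.

Lemma dominating_unfold (mu : M) :
  dominating mu = dominating_step mu (fun nu _ => dominating nu).
Proof.
  apply (Fix_eq strictly_below_wf (fun _ => Lam) dominating_step).
  intros nu g1 g2 E; f_equal.
  apply functional_extensionality_dep; intros x.
  apply functional_extensionality_dep; intros h; apply E.
Qed.

Lemma dominating_admissible (mu : M) :
  admissible mu (fun nu _ => dominating nu) (dominating mu).
Proof.
  rewrite (dominating_unfold mu).
  unfold dominating_step; apply epsilon_spec, admissible_exists.
Qed.

Lemma dominating_equiv (mu mu' : M) :
  dle mu mu' -> dle mu' mu -> dominating mu = dominating mu'.
Proof.
  intros H1 H2; rewrite !dominating_unfold; unfold dominating_step.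
  rewrite (proof_irrelevance _ (inhabits (b mu)) (inhabits (b mu'))).
  f_equal; apply functional_extensionality; intros l.
  apply propositional_extensionality; split; apply admissible_equiv; assumption.
Qed.

Lemma dominating_monotone (mu mu' : M) :
  dle mu mu' -> dle (dominating mu) (dominating mu').
Proof.
  intros H; destruct (classic (dle mu' mu)) as [H' | H'].
  - rewrite (dominating_equiv mu mu' H H'); apply dle_refl.
  - apply (proj2 (dominating_admissible mu')); split; assumption.
Qed.

Lemma dominating_ge (mu : M) : dle (b mu) (dominating mu).
Proof. apply (proj1 (dominating_admissible mu)), dle_refl. Qed.

End MonotoneDomination.

Lemma monotone_dominating {M Lam : DirPreorder} (hM : cofinite M)
    (b : M -> Lam) :
  exists f : M -> Lam,
    (forall mu mu', dle mu mu' -> dle (f mu) (f mu')) /\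
    (forall mu, dle (b mu) (f mu)).
Proof.
  exists (dominating hM b); split;
    [apply dominating_monotone | apply dominating_ge].
Qed.

Section Jmorphisms.

Context {C : Category} {J : DirPoset} {X Y : InvSys C}.

Definition commutes_at (F : JData J X Y) {mu mu' : ind Y} (h : dle mu mu')
    (lam : ind X) : Prop :=
  exists (h1 : dle (jmap F mu) lam) (h2 : dle (jmap F mu') lam) (j0 : J),
    forall j' : J, dle j0 j' ->
      comp (jcomp F j' mu) (bond X h1)
      = comp (bond Y h) (comp (jcomp F j' mu') (bond X h2)).

Lemma commutes_at_irrelevant (F : JData J X Y) {mu mu' : ind Y}
    (h h' : dle mu mu') {lam : ind X} :
  commutes_at F h lam -> commutes_at F h' lam.
Proof. unfold commutes_at; rewrite (bond_irrelevant h h'); trivial. Qed.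

Lemma commutes_at_mono (F : JData J X Y) {mu mu' : ind Y} (h : dle mu mu')
    {lam lam' : ind X} :
  dle lam lam' -> commutes_at F h lam -> commutes_at F h lam'.
Proof.
  intros Hl (h1 & h2 & j0 & E).
  exists (dle_trans h1 Hl), (dle_trans h2 Hl), j0; intros j' Hj.
  rewrite <- (bond_comp h1 Hl), <- (bond_comp h2 Hl), !comp_assoc, E by exact Hj.
  rewrite !comp_assoc; reflexivity.
Qed.

Lemma Jmorphism_commutes_below (F : JData J X Y) :
  cofinite (ind Y) -> is_Jmorphism F ->
  exists b : ind Y -> ind X,
    forall (mu mu' : ind Y) (h : dle mu mu'), commutes_at F h (b mu').
Proof.
  intros hM hF.
  assert (Hb : forall mu', exists u : ind X,
             forall mu (h : dle mu mu'), commutes_at F h u).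
  { intros mu'.
    assert (Hlam : exists lam : ind Y -> ind X,
               forall mu (h : dle mu mu'), commutes_at F h (lam mu)).
    { apply (choice (fun mu l => forall h : dle mu mu', commutes_at F h l)).
      intros mu; destruct (classic (dle mu mu')) as [h | Hnle].
      - destruct (hF mu mu' h) as (lam & HF); exists lam.
        intros h'; exact (commutes_at_irrelevant F h h' HF).
      - exists (jmap F mu); intros h; contradiction. }
    destruct Hlam as [lam Hlam], (hM mu') as [pre Hpre].
    destruct (upper_bound_list lam pre (jmap F mu')) as [u [_ Hu]].
    exists u; intros mu h.
    exact (commutes_at_mono F h (Hu mu (Hpre mu h)) (Hlam mu h)). }
  apply choice in Hb as [b Hb].
  exists b; intros mu mu' h; apply Hb.
Qed.

Lemma Jmorphism_of_simple_squares (G : JData J X Y) :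
  (forall mu mu', dle mu mu' -> dle (jmap G mu) (jmap G mu')) ->
  (forall (mu mu' : ind Y) (h : dle mu mu')
          (h1 : dle (jmap G mu) (jmap G mu')),
     exists j0 : J, forall j' : J, dle j0 j' ->
       comp (jcomp G j' mu) (bond X h1) = comp (bond Y h) (jcomp G j' mu')) ->
  is_Jmorphism G.
Proof.
  intros Hmono Hsq mu mu' h.
  destruct (Hsq mu mu' h (Hmono mu mu' h)) as [j0 E].
  exists (jmap G mu'), (Hmono mu mu' h), (dle_refl _), j0.
  intros j' Hj; rewrite bond_id, comp_id_r; exact (E j' Hj).
Qed.

Definition shift_Jdata (F : JData J X Y) {f : ind Y -> ind X}
    (hf : forall mu, dle (jmap F mu) (f mu)) : JData J X Y :=
  {| jmap := f; jcomp := fun j mu => comp (jcomp F j mu) (bond X (hf mu)) |}.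

Lemma shift_Jdata_simple (F : JData J X Y) {f : ind Y -> ind X}
    (hf : forall mu, dle (jmap F mu) (f mu)) :
  (forall mu mu', dle mu mu' -> dle (f mu) (f mu')) ->
  (forall (mu mu' : ind Y) (h : dle mu mu'), commutes_at F h (f mu')) ->
  is_simple (shift_Jdata F hf).
Proof.
  intros Hmono Hsq.
  assert (Hsq' : forall (mu mu' : ind Y) (h : dle mu mu') (h1 : dle (f mu) (f mu')),
     exists j0 : J, forall j' : J, dle j0 j' ->
       comp (comp (jcomp F j' mu) (bond X (hf mu))) (bond X h1)
       = comp (bond Y h) (comp (jcomp F j' mu') (bond X (hf mu')))).
  { intros mu mu' h h1; destruct (Hsq mu mu' h) as (k1 & k2 & j0 & E).
    exists j0; intros j' Hj.
    rewrite <- comp_assoc, (bond_comp (hf mu) h1 k1), E by exact Hj.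
    rewrite (bond_irrelevant k2 (hf mu')); reflexivity. }
  split; [apply Jmorphism_of_simple_squares |]; auto.
Qed.

Lemma shift_Jdata_sim (F : JData J X Y) {f : ind Y -> ind X}
    (hf : forall mu, dle (jmap F mu) (f mu)) :
  is_Jmorphism F -> Jsim F (shift_Jdata F hf).
Proof.
  intros hF mu.
  destruct (hF mu mu (dle_refl mu)) as (_ & _ & _ & j0 & _).
  exists (f mu), (hf mu), (dle_refl _), j0; intros j' _; simpl.
  rewrite bond_id, comp_id_r; reflexivity.
Qed.

End Jmorphisms.

Theorem lemma6 (C : Category) (J : DirPoset) (X Y : InvSys C)
    (hM : cofinite (ind Y)) (F : JData J X Y) (hF : is_Jmorphism F) :
  exists F' : JData J X Y, is_Jmorphism F' /\ is_simple F' /\ Jsim F F'.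
Proof.
  destruct (Jmorphism_commutes_below F hM hF) as [b Hb].
  destruct (monotone_dominating hM b) as [f [Hmono Hbf]].
  assert (Hsq : forall (mu mu' : ind Y) (h : dle mu mu'), commutes_at F h (f mu'))
    by (intros mu mu' h; exact (commutes_at_mono F h (Hbf mu') (Hb mu mu' h))).
  assert (hf : forall mu, dle (jmap F mu) (f mu))
    by (intros mu; destruct (Hsq mu mu (dle_refl mu)) as [h1 _]; exact h1).
  pose proof (shift_Jdata_simple F hf Hmono Hsq) as Hsimple.
  exists (shift_Jdata F hf); split; [exact (proj1 Hsimple) |].
  split; [exact Hsimple | exact (shift_Jdata_sim F hf hF)].
Qed.
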